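(* Let $n$ and $i$ be positive integers with $i<n/3$. Then there exists a partition $\mathfrak p$ of $n$ such that: (1) if $n\neq 4i+2$ and $(n,i)\neq(8,1)$, then for every integer $1\le m\le n$, $m$ is a partial sum of $\mathfrak p$ if and only if $m\notin\{i,\,n-i\}$; (2) if $n=4i+2$ or $(n,i)=(8,1)$, then for every integer $1\le m\le n$, $m$ is a partial sum of $\mathfrak p$ if and only if $m\notin\{i,\,n-i,\,n/2\}$.
   Context: A partition of $n$ is a finite multiset $(a_1,\dots,a_t)$ of positive integers with sum $n$. An integer $m$ is a partial sum of the partition $(a_1,\dots,a_t)$ if $m=a_{j_1}+\cdots+a_{j_\ell}$ for some $\ell\ge1$ and indices $1\le j_1<\dots<j_\ell\le t$. *)

From mathcomp Require Import all_boot.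
Set Implicit Arguments. Unset Strict Implicit. Unset Printing Implicit Defensive.

(* A partition of n: a finite list (order irrelevant) of positive integers with sum n. *)
Definition is_partition (n : nat) (p : seq nat) : Prop :=
  all (fun a => 0 < a) p /\ sumn p = n.

(* m is a partial sum of p: sum of a nonempty sub-multiset of the parts
   (chosen by distinct indices), i.e. a nonempty subsequence. *)
Definition partial_sum (p : seq nat) (m : nat) : Prop :=
  exists s : seq nat, [/\ subseq s p, s != [::] & sumn s = m].

From mathcomp Require Import all_boot.
From mathcomp Require Import zify.

(* Write [subset_sum p m] when m is the sum of a (possibly
   empty) subsequence of p; it obeys the recursion "m is a subset sum of
   d :: p iff m or m - d is a subset sum of p".  Say that p realises n with
   excluded set E when p is a partition of n whose subset sums are exactly
   the m <= n outside E.
   Generic case (E = {i, n - i}): for 3i < n <= 4i + 1 the partition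
   (n - 2i, i + 1, 1^(i-1)) works directly.  Adding a part d with
   i + 1 <= d, d + i <= T and d + 2i <> T to a realisation of T gives a
   realisation of T + d, so larger n are reached by adding parts i + 1,
   except n = 5i + 3 (reached from 4i + 1 by adding i + 2) and (n, i) =
   (10, 1) (reached from 7 by adding 3), which would otherwise step onto
   the exceptional values.
   Exceptional cases (E = {i, n - i, n/2}): (i + 1, i + 1, i + 1, 1^(i-1))
   for n = 4i + 2 and (2, 3, 3) for (n, i) = (8, 1). *)

Definition subset_sum (p : seq nat) (m : nat) : Prop :=
  exists2 s, subseq s p & sumn s = m.

Lemma subset_sum_nil m : subset_sum [::] m <-> m = 0.
Proof.
split; last by move->; exists [::].
by case=> s; rewrite subseq0 => /eqP -> <-.
Qed.

Lemma subset_sum_cons d p m :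
  subset_sum (d :: p) m <-> subset_sum p m \/ (d <= m /\ subset_sum p (m - d)).
Proof.
split.
- case=> s; case: s => [|x s] sub_s <-.
    by left; exists [::]; rewrite ?sub0seq.
  move: sub_s => /=; case: eqP => [-> sub_s | _ sub_s].
    by right; split; [apply: leq_addr | exists s; rewrite ?addKn].
  by left; exists (x :: s).
- case=> [[s sub_s <-] | [le_dm [s sub_s sum_s]]].
    by exists s => //; apply: subseq_trans sub_s (subseq_cons p d).
  by exists (d :: s); rewrite /= ?eqxx // sum_s subnKC.
Qed.

Lemma subset_sum_ones k m : subset_sum (nseq k 1) m <-> m <= k.
Proof.
elim: k m => [|k IH] m; first by rewrite subset_sum_nil; lia.
by rewrite [nseq _ _]/= subset_sum_cons !IH; lia.
Qed.

Definition realises (n : nat) (excl : nat -> Prop) (p : seq nat) : Prop :=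
  [/\ all (fun a => 0 < a) p, sumn p = n &
      forall m, subset_sum p m <-> m <= n /\ ~ excl m].

Definition symmetric_pair (i n m : nat) : Prop := m = i \/ m = n - i.

Lemma realises_cons_part n excl p d :
  0 < d -> sumn p = n -> all (fun a => 0 < a) p ->
  (forall m, subset_sum (d :: p) m <-> m <= n + d /\ ~ excl m) ->
  realises (n + d) excl (d :: p).
Proof.
by move=> d_gt0 sum_p pos_p sums; split; rewrite //= ?d_gt0 // sum_p addnC.
Qed.

(* Adding a part d to a generic realisation of T.  The bounds ensure that
   the sums of p and the sums of p shifted by d cover [0, T + d] except
   i and T + d - i. *)
Lemma realises_add_part i T p d :
  0 < i -> realises T (symmetric_pair i T) p ->
  i + 1 <= d -> d + i <= T -> d + 2 * i <> T ->
  realises (T + d) (symmetric_pair i (T + d)) (d :: p).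
Proof.
move=> i_gt0 [pos_p sum_p sums_p] d_lo d_hi d_ne.
apply: realises_cons_part => // [|m]; first lia.
by rewrite subset_sum_cons !sums_p /symmetric_pair; lia.
Qed.

Definition base_partition (i c : nat) : seq nat := c :: (i + 1) :: nseq i.-1 1.

Lemma realises_base i c : 0 < i -> i + 1 <= c <= 2 * i + 1 ->
  realises (2 * i + c) (symmetric_pair i (2 * i + c)) (base_partition i c).
Proof.
move=> i_gt0 c_bounds; split.
- by rewrite /= all_nseq /= orbT andbT; lia.
- by rewrite /= sumn_nseq mul1n; lia.
- by move=> m; rewrite !subset_sum_cons !subset_sum_ones /symmetric_pair; lia.
Qed.

Lemma realises_small i n : 0 < i -> 3 * i < n <= 4 * i + 1 ->
  realises n (symmetric_pair i n) (base_partition i (n - 2 * i)).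
Proof.
move=> i_gt0 n_bounds; have -> : n = 2 * i + (n - 2 * i) by lia.
by rewrite [X in base_partition _ X]addKn; apply: realises_base; lia.
Qed.

Lemma generic_realisation i n : 0 < i -> 3 * i < n ->
  n <> 4 * i + 2 -> ~ (n = 8 /\ i = 1) ->
  exists p, realises n (symmetric_pair i n) p.
Proof.
move=> i_gt0; elim/ltn_ind: n => n IH n_gt n_ne n_ne8.
have [n_small | n_large] := leqP n (4 * i + 1).
  by exists (base_partition i (n - 2 * i)); apply: realises_small; lia.
have [n_eq | n_ne5] := eqVneq n (5 * i + 3).
  exists ((i + 2) :: base_partition i (2 * i + 1)).
  have -> : n = (2 * i + (2 * i + 1)) + (i + 2) by lia.
  by apply: realises_add_part => //; first apply: realises_base => //; lia.
have [[n10 i1] | not_10_1] : (n = 10 /\ i = 1) \/ ~ (n = 10 /\ i = 1) by lia.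
  subst n i; have [p realp] := IH 7 ltac:(lia) ltac:(lia) ltac:(lia) ltac:(lia).
  by exists (3 :: p); apply: (realises_add_part 1 7).
have [p realp] := IH (n - (i + 1)) ltac:(lia) ltac:(lia) ltac:(lia) ltac:(lia).
exists ((i + 1) :: p); have -> : n = (n - (i + 1)) + (i + 1) by lia.
by apply: realises_add_part => //; lia.
Qed.

Lemma exceptional_realisation i n :
  0 < i -> (n = 4 * i + 2 \/ (n = 8 /\ i = 1)) ->
  exists p, realises n (fun m => m = i \/ m = n - i \/ 2 * m = n) p.
Proof.
move=> i_gt0 [-> | [-> ->]].
- exists ((i + 1) :: (i + 1) :: (i + 1) :: nseq i.-1 1); split.
  + by rewrite /= all_nseq /= orbT andbT addn1.
  + by rewrite /= sumn_nseq mul1n; lia.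
  + by move=> m; rewrite !subset_sum_cons !subset_sum_ones; lia.
- exists [:: 2; 3; 3]; split => // m.
  by rewrite !subset_sum_cons !subset_sum_nil; lia.
Qed.

Lemma partial_sum_subset_sum p m : 0 < m -> partial_sum p m <-> subset_sum p m.
Proof.
move=> m_gt0; split; first by case=> s [sub_s _ sum_s]; exists s.
case=> s sub_s sum_s; exists s; split => //.
by apply: contraTneq m_gt0 => s0; rewrite -sum_s s0.
Qed.

Lemma realises_partial_sums n excl p : realises n excl p ->
  is_partition n p /\ forall m, 1 <= m <= n -> (partial_sum p m <-> ~ excl m).
Proof.
case=> pos_p sum_p sums_p; split => // m /andP[m_gt0 m_le].
by rewrite partial_sum_subset_sum // sums_p; tauto.
Qed.

Theorem lemma2p1 (n i : nat) (hi : 0 < i) (hin : 3 * i < n) :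
  exists p : seq nat, is_partition n p /\
    ((~ (n = 4 * i + 2 \/ (n = 8 /\ i = 1)) ->
       forall m, 1 <= m <= n -> (partial_sum p m <-> (m <> i /\ m <> n - i))) /\
     ((n = 4 * i + 2 \/ (n = 8 /\ i = 1)) ->
       forall m, 1 <= m <= n ->
         (partial_sum p m <-> (m <> i /\ m <> n - i /\ 2 * m <> n)))).
Proof.
have [exc | generic] : (n = 4 * i + 2 \/ (n = 8 /\ i = 1)) \/
                       ~ (n = 4 * i + 2 \/ (n = 8 /\ i = 1)) by lia.
- have [p /realises_partial_sums [part_p sums_p]] :=
    exceptional_realisation i n hi exc.
  exists p; split => //; split => [/(_ exc) // | _ m /sums_p ->]; tauto.
- have [p /realises_partial_sums [part_p sums_p]] :
      exists p, realises n (symmetric_pair i n) p.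
    by apply: generic_realisation => //; tauto.
  exists p; split => //; split => [_ m /sums_p -> | /generic //].
  by rewrite /symmetric_pair; tauto.
Qed.
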